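(* A function $f:(0,\infty)\to(0,\infty)$ is stable, i.e. satisfies $|f(x)-f(y)|\le\sqrt{\frac{f(x)f(y)}{xy}}\,|x-y|$ for all $x,y>0$, if and only if $x\mapsto f(x)/x$ is non-increasing and $x\mapsto xf(x)$ is non-decreasing. *)

From Stdlib Require Import Reals Lra.
Open Scope R_scope.

(* f : (0,oo) -> (0,oo) is modelled as f : R -> R with f x > 0 for x > 0;
   values of f outside (0,oo) are irrelevant (never used). *)
Definition positive_on_pos (f : R -> R) : Prop :=
  forall x, 0 < x -> 0 < f x.

Definition stable (f : R -> R) : Prop :=
  forall x y, 0 < x -> 0 < y ->
    Rabs (f x - f y) <= sqrt (f x * f y / (x * y)) * Rabs (x - y).

Definition ratio_nonincreasing (f : R -> R) : Prop :=
  forall x y, 0 < x -> x <= y -> f y / y <= f x / x.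

Definition prod_nondecreasing (f : R -> R) : Prop :=
  forall x y, 0 < x -> x <= y -> x * f x <= y * f y.

From Stdlib Require Import Reals Lra Psatz.
Open Scope R_scope.

(* Squaring and clearing denominators turns stability at a pair [x < y] into
   the polynomial inequality [x y (a - b)^2 <= a b (x - y)^2] with [a = f x],
   [b = f y]; that inequality is exactly the conjunction of the two
   monotonicity conditions between [x] and [y]. *)

Lemma Rmult_le_pos_l_iff (c u v : R) : 0 < c -> c * u <= c * v <-> u <= v.
Proof.
  intros hc; split; [apply Rmult_le_reg_l; exact hc |].
  intros h; apply Rmult_le_compat_l; [lra | exact h].
Qed.

Lemma Rdiv_le_Rdiv_iff (x y a b : R) : 0 < x -> 0 < y ->
  b / y <= a / x <-> b * x <= a * y.
Proof.
  intros hx hy.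
  rewrite <- (Rmult_le_pos_l_iff (x * y)) by nra.
  replace (x * y * (b / y)) with (b * x) by (field; lra).
  replace (x * y * (a / x)) with (a * y) by (field; lra).
  reflexivity.
Qed.

Lemma Rabs_le_sqrt_mult_Rabs_iff (u v q : R) : 0 <= q ->
  Rabs u <= sqrt q * Rabs v <-> u² <= q * v².
Proof.
  intros hq.
  assert (E : sqrt q * Rabs v = Rabs (sqrt q * v)).
  { now rewrite Rabs_mult, (Rabs_pos_eq (sqrt q)) by apply sqrt_pos. }
  assert (S : (sqrt q * v)² = q * v²) by (rewrite Rsqr_mult, Rsqr_sqrt; auto).
  rewrite E, <- S.
  split; [apply Rsqr_le_abs_1 | apply Rsqr_le_abs_0].
Qed.

Lemma stable_ineq_iff_sq (x y a b : R) :
  0 < x -> 0 < y -> 0 < a -> 0 < b ->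
  Rabs (a - b) <= sqrt (a * b / (x * y)) * Rabs (x - y) <->
  x * y * (a - b)² <= a * b * (x - y)².
Proof.
  intros hx hy ha hb.
  assert (hxy : 0 < x * y) by nra.
  rewrite Rabs_le_sqrt_mult_Rabs_iff by (apply Rlt_le, Rdiv_lt_0_compat; nra).
  rewrite <- (Rmult_le_pos_l_iff (x * y)) by exact hxy.
  replace (x * y * (a * b / (x * y) * (x - y)²)) with (a * b * (x - y)²)
    by (field; lra).
  reflexivity.
Qed.

(* The gap between the two sides factors as [(x a - y b) (y a - x b)]; for
   [x < y] both factors cannot be positive, since adding [x a > y b] and
   [x b > y a] would give [x > y]. *)
Lemma sq_ineq_iff_monotone (x y a b : R) :
  0 < x -> x < y -> 0 < a -> 0 < b ->
  x * y * (a - b)² <= a * b * (x - y)² <-> b * x <= a * y /\ x * a <= y * b.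
Proof.
  intros hx hxy ha hb.
  assert (gap : x * y * (a - b)² - a * b * (x - y)²
                = (x * a - y * b) * (y * a - x * b))
    by (unfold Rsqr; ring).
  split.
  - intros h.
    assert (hsum : (x * a - y * b) + (x * b - y * a) < 0) by nra.
    split; apply Rnot_lt_le; intros hlt; nra.
  - intros [h1 h2]; nra.
Qed.

Lemma stable_ineq_iff_monotone (x y a b : R) :
  0 < x -> x < y -> 0 < a -> 0 < b ->
  Rabs (a - b) <= sqrt (a * b / (x * y)) * Rabs (x - y) <->
  b / y <= a / x /\ x * a <= y * b.
Proof.
  intros hx hxy ha hb.
  rewrite stable_ineq_iff_sq, sq_ineq_iff_monotone, Rdiv_le_Rdiv_iff by lra.
  reflexivity.
Qed.

Theorem mainTheorem7 (f : R -> R) (hf : positive_on_pos f) :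
  stable f <-> (ratio_nonincreasing f /\ prod_nondecreasing f).
Proof.
  split.
  - intros hstab.
    assert (mono : forall x y, 0 < x -> x < y ->
                   f y / y <= f x / x /\ x * f x <= y * f y).
    { intros x y hx hxy.
      apply stable_ineq_iff_monotone;
        [lra | lra | apply hf; lra | apply hf; lra | apply hstab; lra]. }
    split; intros x y hx hxy; destruct (Rle_lt_or_eq_dec x y hxy) as [lt | <-];
      solve [apply mono; auto | apply Rle_refl].
  - intros [hratio hprod].
    assert (stable_lt : forall x y, 0 < x -> x < y ->
              Rabs (f x - f y) <= sqrt (f x * f y / (x * y)) * Rabs (x - y)).
    { intros x y hx hxy.
      apply stable_ineq_iff_monotone; [lra | lra | apply hf; lra | apply hf; lra |].
      split; [apply hratio | apply hprod]; lra. }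
    intros x y hx hy.
    destruct (Rtotal_order x y) as [lt | [<- | gt]].
    + now apply stable_lt.
    + rewrite !Rminus_diag, Rabs_R0, Rmult_0_r; apply Rle_refl.
    + rewrite Rabs_minus_sym, (Rabs_minus_sym x), (Rmult_comm (f x)), (Rmult_comm x).
      now apply stable_lt.
Qed.
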